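(* For each natural number $n$, the asymptotic densities $\nu^{(n)}(\epsilon_0)=\lim_{m\to\infty}\#\{k:1\le k\le m,\ \xi_n(k)\text{ even}\}/m$ and $\nu^{(n)}(\epsilon_1)=\lim_{m\to\infty}\#\{k:1\le k\le m,\ \xi_n(k)\text{ odd}\}/m$ exist and $$\nu^{(n)}(\epsilon_0)=\frac{2}{3}+\frac{(-1)^{n+1}}{3\cdot 2^{n+1}},\qquad \nu^{(n)}(\epsilon_1)=\frac{1}{3}+\frac{(-1)^{n}}{3\cdot 2^{n+1}}.$$
   Context: $\mathbf{N}=\{1,2,3,\dots\}$. The Collatz map $\xi:\mathbf{N}\to\mathbf{N}$ is $\xi(\omega)=\omega/2$ if $\omega$ is even and $\xi(\omega)=3\omega+1$ if $\omega$ is odd; $\xi_n$ denotes its $n$-fold iterate, with $\xi_0$ the identity. *)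

From Stdlib Require Import Reals Arith List.
Import ListNotations.

Definition collatz (w : nat) : nat :=
  if Nat.even w then Nat.div2 w else 3 * w + 1.

Definition collatz_iter (n : nat) (w : nat) : nat := Nat.iter n collatz w.

Definition count_even (n m : nat) : nat :=
  length (filter (fun k => Nat.even (collatz_iter n k)) (seq 1 m)).
Definition count_odd (n m : nat) : nat :=
  length (filter (fun k => Nat.odd (collatz_iter n k)) (seq 1 m)).

(* The residue of [collatz w] modulo [2^a] depends only on [w] modulo [2^(a+1)]: an odd class
   [s] mod [2^a] has the single preimage class [2s] mod [2^(a+1)], while an even class [s] has
   three, namely [2s] and the two lifts of the unique odd [r] with [3r+1 = s] mod [2^a] (3 is
   invertible modulo [2^a]).  Hence, by induction on [n], the set of [k] with
   [collatz_iter n k = s] mod [2^a] has a density [w_n(s) / 2^a], where [w_n(s)] depends only on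
   the parity of [s]: writing [e_n], [o_n] for the two values, [e_0 = o_0 = 1] (residue classes),
   [o_(n+1) = e_n / 2] and [e_(n+1) = e_n / 2 + o_n].  Taking [a = 1] gives the theorem. *)

From Stdlib Require Import Reals Arith List Lia Lra.

Lemma pow2_neq0 a : 2 ^ a <> 0.
Proof. apply Nat.pow_nonzero; lia. Qed.

Lemma odd_add_pow2 a r : 1 <= a -> Nat.odd (r + 2 ^ a) = Nat.odd r.
Proof.
  intros Ha. destruct a as [|a]; [lia|].
  rewrite Nat.odd_add, Nat.pow_succ_r', Nat.odd_mul. now destruct (Nat.odd r).
Qed.

Lemma even_mod_pow2 a x : 1 <= a -> Nat.even (x mod 2 ^ a) = Nat.even x.
Proof.
  intros Ha. rewrite (Nat.div_mod_eq x (2 ^ a)) at 2.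
  destruct a as [|a]; [lia|].
  rewrite Nat.even_add, Nat.pow_succ_r', <- Nat.mul_assoc, Nat.even_mul.
  now destruct (Nat.even (x mod _)).
Qed.

Lemma mod_double_cases w P :
  w mod (2 * P) = w mod P \/ w mod (2 * P) = w mod P + P.
Proof.
  rewrite Nat.mul_comm, Nat.Div0.mod_mul_r.
  pose proof (Nat.mod_upper_bound (w / P) 2 ltac:(lia)).
  destruct ((w / P) mod 2) as [|[|]]; lia.
Qed.

(* Since [3 u = 1 + q 2^a] for some [u], [s |-> u (s + 2^a - 1)] inverts [x |-> 3 x + 1] mod [2^a]. *)
Lemma mul3_add1_bijective_mod_pow2 a : exists g : nat -> nat,
  (forall x, x mod 2 ^ a = g ((3 * x + 1) mod 2 ^ a)) /\
  (forall s, s < 2 ^ a -> g s < 2 ^ a /\ (3 * g s + 1) mod 2 ^ a = s).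
Proof.
  assert (Hinv : exists u q, 3 * u = 1 + q * 2 ^ a).
  { induction a as [|a [u [q H]]]; [now exists 1, 2|].
    rewrite Nat.pow_succ_r'.
    destruct (Nat.Even_or_Odd q) as [[q' ->]|[q' ->]].
    - exists u, q'. nia.
    - exists (u + 2 ^ a), (q' + 2). nia. }
  destruct Hinv as [u [q Hu]]. pose proof (pow2_neq0 a) as HP. set (P := 2 ^ a) in *.
  exists (fun s => (u * (s + (P - 1))) mod P). split.
  - intros x.
    rewrite <- Nat.Div0.mul_mod_idemp_r, Nat.Div0.add_mod_idemp_l, Nat.Div0.mul_mod_idemp_r.
    replace (u * (3 * x + 1 + (P - 1))) with (x + (u + q * x) * P) by nia.
    now rewrite Nat.Div0.mod_add.
  - intros s Hs. split; [now apply Nat.mod_upper_bound|].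
    rewrite <- Nat.Div0.add_mod_idemp_l, Nat.Div0.mul_mod_idemp_r, Nat.Div0.add_mod_idemp_l.
    replace (3 * (u * (s + (P - 1))) + 1) with (s + (1 + q * (s + (P - 1))) * P) by nia.
    rewrite Nat.Div0.mod_add. now apply Nat.mod_small.
Qed.

Lemma even_mul3_add1_mod_pow2 a x : 1 <= a -> Nat.even ((3 * x + 1) mod 2 ^ a) = Nat.odd x.
Proof.
  intros Ha. rewrite even_mod_pow2, Nat.even_add, Nat.even_mul by exact Ha.
  rewrite <- Nat.negb_even. now destruct (Nat.even x).
Qed.

Lemma collatz_double t : collatz (2 * t) = t.
Proof. unfold collatz. now rewrite Nat.even_mul, Nat.div2_double. Qed.

Lemma collatz_odd w : Nat.odd w = true -> collatz w = 3 * w + 1.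
Proof. unfold collatz. rewrite <- Nat.negb_even. now destruct (Nat.even w). Qed.

Lemma double_mod_double t s P : P <> 0 -> (2 * t) mod (2 * P) = 2 * s <-> t mod P = s.
Proof. intros HP. rewrite Nat.Div0.mul_mod_distr_l. lia. Qed.

Lemma odd_mod_pow2_ne_double a w s : 1 <= a -> Nat.odd w = true -> w mod 2 ^ a <> 2 * s.
Proof.
  intros Ha Hw E. apply (f_equal Nat.even) in E.
  rewrite even_mod_pow2, Nat.even_mul in E by exact Ha.
  now rewrite <- Nat.negb_even, E in Hw.
Qed.

Lemma collatz_preimage_odd a s w : 1 <= a -> s < 2 ^ a -> Nat.odd s = true ->
  collatz w mod 2 ^ a = s <-> w mod 2 ^ S a = 2 * s.
Proof.
  intros Ha Hs Hso. rewrite Nat.pow_succ_r'.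
  destruct (Nat.Even_or_Odd w) as [[t ->]|[t ->]].
  - rewrite collatz_double. symmetry. now apply double_mod_double, pow2_neq0.
  - assert (Hw : Nat.odd (2 * t + 1) = true)
      by (rewrite <- Nat.negb_even, Nat.even_add, Nat.even_mul; reflexivity).
    rewrite collatz_odd by exact Hw. split; intros E.
    + apply (f_equal Nat.even) in E.
      rewrite even_mul3_add1_mod_pow2, Hw in E by exact Ha.
      now rewrite <- Nat.negb_even, <- E in Hso.
    + rewrite <- Nat.pow_succ_r' in E. exfalso. exact (odd_mod_pow2_ne_double (S a) _ s ltac:(lia) Hw E).
Qed.

Lemma even_mod_pow2_ne_odd a w r : 1 <= a -> Nat.even w = true -> Nat.odd r = true ->
  w mod 2 ^ a <> r.
Proof.
  intros Ha Hw Hr E. apply (f_equal Nat.even) in E.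
  rewrite even_mod_pow2, Hw in E by exact Ha.
  now rewrite <- Nat.negb_even, <- E in Hr.
Qed.

Lemma collatz_preimage_even a s : 1 <= a -> s < 2 ^ a -> Nat.even s = true ->
  exists r, r < 2 ^ a /\ Nat.odd r = true /\ forall w,
    collatz w mod 2 ^ a = s <->
    w mod 2 ^ S a = 2 * s \/ w mod 2 ^ S a = r \/ w mod 2 ^ S a = r + 2 ^ a.
Proof.
  intros Ha Hs Hse.
  destruct (mul3_add1_bijective_mod_pow2 a) as [g [Hg_left Hg_right]].
  destruct (Hg_right s Hs) as [Hgs_lt Hgs].
  assert (Hgs_odd : Nat.odd (g s) = true).
  { rewrite <- (even_mul3_add1_mod_pow2 a (g s) Ha), Hgs. exact Hse. }
  assert (Hgs_odd' : Nat.odd (g s + 2 ^ a) = true).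
  { now rewrite odd_add_pow2. }
  exists (g s). split; [exact Hgs_lt|]. split; [exact Hgs_odd|]. intros w.
  destruct (Nat.Even_or_Odd w) as [[t ->]|[t ->]].
  - assert (Ht : Nat.even (2 * t) = true) by (rewrite Nat.even_mul; reflexivity).
    pose proof (even_mod_pow2_ne_odd (S a) _ _ ltac:(lia) Ht Hgs_odd).
    pose proof (even_mod_pow2_ne_odd (S a) _ _ ltac:(lia) Ht Hgs_odd').
    rewrite collatz_double, Nat.pow_succ_r', double_mod_double by apply pow2_neq0.
    rewrite <- Nat.pow_succ_r'. tauto.
  - assert (Hw : Nat.odd (2 * t + 1) = true)
      by (rewrite <- Nat.negb_even, Nat.even_add, Nat.even_mul; reflexivity).
    pose proof (odd_mod_pow2_ne_double (S a) _ s ltac:(lia) Hw).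
    rewrite collatz_odd by exact Hw.
    assert (Hres : (3 * (2 * t + 1) + 1) mod 2 ^ a = s <-> (2 * t + 1) mod 2 ^ a = g s).
    { split; intros E.
      - now rewrite Hg_left, E.
      - rewrite <- Nat.Div0.add_mod_idemp_l, <- Nat.Div0.mul_mod_idemp_r, E.
        rewrite Nat.Div0.add_mod_idemp_l. exact Hgs. }
    rewrite Hres, Nat.pow_succ_r' in *.
    pose proof (Nat.mod_upper_bound (2 * t + 1) (2 ^ a) (pow2_neq0 a)).
    destruct (mod_double_cases (2 * t + 1) (2 ^ a)) as [E|E]; rewrite E in *; lia.
Qed.

Open Scope R_scope.

Definition count_sat (P : nat -> bool) (l : list nat) : nat := length (filter P l).

Definition density (P : nat -> bool) (d : R) : Prop :=
  Un_cv (fun m => INR (count_sat P (seq 1 m)) / INR m) d.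

Lemma Un_cv_of_error_bound (u : nat -> R) (l K : R) :
  (forall m, (0 < m)%nat -> Rabs (u m - l) <= K / INR m) -> Un_cv u l.
Proof.
  intros Hbound eps Heps.
  assert (HK : 0 < Rabs K + 1) by (pose proof (Rabs_pos K); lra).
  destruct (archimed_cor1 (eps / (Rabs K + 1))) as [N [HN HN0]].
  { apply Rdiv_lt_0_compat; lra. }
  exists N. intros m Hm. unfold R_dist.
  assert (HNR : 0 < INR N) by (apply lt_0_INR; lia).
  assert (HmN : INR N <= INR m) by (apply le_INR; lia).
  assert (HmR : 0 < INR m) by lra.
  apply Rle_lt_trans with (K / INR m); [apply Hbound; lia|].
  apply Rle_lt_trans with ((Rabs K + 1) / INR N).
  - apply Rle_trans with ((Rabs K + 1) / INR m); unfold Rdiv.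
    + apply Rmult_le_compat_r; [left; now apply Rinv_0_lt_compat|].
      pose proof (Rle_abs K); lra.
    + apply Rmult_le_compat_l; [lra|]. now apply Rinv_le_contravar.
  - apply Rmult_lt_reg_r with (/ (Rabs K + 1)); [now apply Rinv_0_lt_compat|].
    replace ((Rabs K + 1) / INR N * / (Rabs K + 1)) with (/ INR N) by (field; lra).
    exact HN.
Qed.

Lemma count_sat_app P l1 l2 :
  count_sat P (l1 ++ l2) = (count_sat P l1 + count_sat P l2)%nat.
Proof. unfold count_sat. now rewrite filter_app, length_app. Qed.

Lemma count_sat_le_prefix P s a b :
  (a <= b)%nat -> (count_sat P (seq s a) <= count_sat P (seq s b))%nat.
Proof.
  intros Hab. replace b with (a + (b - a))%nat by lia.
  rewrite seq_app, count_sat_app. lia.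
Qed.

Section Periodic.

Variables (P : nat -> bool) (p : nat).
Hypothesis p_pos : (0 < p)%nat.
Hypothesis P_periodic : forall k, P (k + p)%nat = P k.

Lemma count_sat_shift_period s len : count_sat P (seq (s + p) len) = count_sat P (seq s len).
Proof.
  revert s; induction len as [|len IH]; intros s; [reflexivity|].
  unfold count_sat in *; cbn [seq filter]. rewrite P_periodic.
  specialize (IH (S s)). cbn in IH.
  destruct (P s); cbn; now rewrite IH.
Qed.

Lemma count_sat_periods q : count_sat P (seq 0 (q * p)) = (q * count_sat P (seq 0 p))%nat.
Proof.
  induction q as [|q IH]; [reflexivity|].
  rewrite Nat.mul_succ_l, Nat.add_comm, seq_app, count_sat_app.
  rewrite <- (Nat.add_0_l p) at 2. rewrite count_sat_shift_period, IH. lia.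
Qed.

Lemma count_sat_periodic_bounds m :
  let c := count_sat P (seq 0 p) in let x := count_sat P (seq 1 m) in
  (x * p <= c * m + c * p /\ c * m <= x * p + (c + 1) * p)%nat.
Proof.
  cbv zeta. set (q := (m / p)%nat).
  assert (Hq : (q * p <= m < q * p + p)%nat).
  { pose proof (Nat.div_mod_eq m p). pose proof (Nat.mod_upper_bound m p ltac:(lia)). nia. }
  assert (Hshift : (count_sat P (seq 1 m) <= count_sat P (seq 0 (S m))
                    <= count_sat P (seq 1 m) + 1)%nat).
  { unfold count_sat. cbn. destruct (P 0%nat); cbn; lia. }
  pose proof (count_sat_le_prefix P 0 (S m) (S q * p) ltac:(lia)).
  pose proof (count_sat_le_prefix P 0 (q * p) (S m) ltac:(lia)).
  rewrite !count_sat_periods in *. nia.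
Qed.

Lemma density_periodic : density P (INR (count_sat P (seq 0 p)) / INR p).
Proof.
  apply (Un_cv_of_error_bound _ _ (INR (count_sat P (seq 0 p)) + 1)). intros m Hm.
  destruct (count_sat_periodic_bounds m) as [Hup Hlow].
  set (c := count_sat P (seq 0 p)) in *. set (x := count_sat P (seq 1 m)) in *.
  apply le_INR in Hup, Hlow. rewrite !plus_INR, !mult_INR in Hup, Hlow.
  rewrite plus_INR in Hlow.
  assert (HpR : 0 < INR p) by (apply lt_0_INR; lia).
  assert (HmR : 0 < INR m) by (apply lt_0_INR; lia).
  replace (INR x / INR m - INR c / INR p) with ((INR x * INR p - INR c * INR m) / (INR m * INR p))
    by (field; lra).
  replace ((INR c + 1) / INR m) with ((INR c + 1) * INR p / (INR m * INR p)) by (field; lra).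
  apply Rabs_le. unfold Rdiv. rewrite Ropp_mult_distr_l.
  assert (Hinv : 0 <= / (INR m * INR p)) by (left; apply Rinv_0_lt_compat; nra).
  split; apply Rmult_le_compat_r; cbn in Hlow; lra.
Qed.

End Periodic.

Lemma count_sat_orb P Q l : (forall k, P k = true -> Q k = true -> False) ->
  count_sat (fun k => (P k || Q k)%bool) l = (count_sat P l + count_sat Q l)%nat.
Proof.
  intros Hdisj. unfold count_sat. induction l as [|k l IH]; [reflexivity|].
  specialize (Hdisj k). cbn.
  destruct (P k), (Q k); cbn; rewrite ?IH; [exfalso; auto|lia..].
Qed.

Lemma count_sat_eqb_seq0 s l :
  count_sat (fun k => k =? s) (seq 0 l) = if s <? l then 1%nat else 0%nat.
Proof.
  induction l as [|l IH]; [reflexivity|].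
  unfold count_sat in *.
  rewrite seq_S, filter_app, length_app, IH. cbn [filter length].
  destruct (Nat.ltb_spec s l), (Nat.ltb_spec s (S l)), (Nat.eqb_spec (0 + l) s); cbn; lia.
Qed.

Lemma density_ext P Q d : (forall k, P k = true <-> Q k = true) -> density P d -> density Q d.
Proof.
  intros HPQ. apply Un_cv_ext. intros m. unfold count_sat.
  now rewrite (filter_ext P Q) by (intros k; apply Bool.eq_iff_eq_true, HPQ).
Qed.

Lemma density_orb P Q d1 d2 : (forall k, P k = true -> Q k = true -> False) ->
  density P d1 -> density Q d2 -> density (fun k => (P k || Q k)%bool) (d1 + d2).
Proof.
  intros Hdisj HP HQ. unfold density.
  eapply Un_cv_ext; [|exact (CV_plus _ _ _ _ HP HQ)]. intros m. cbn.
  now rewrite count_sat_orb, plus_INR, Rdiv_plus_distr.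
Qed.

Lemma density_residue p s : (s < p)%nat -> density (fun k => k mod p =? s) (1 / INR p).
Proof.
  intros Hs.
  assert (Hcount : count_sat (fun k => k mod p =? s) (seq 0 p) = 1%nat).
  { unfold count_sat. rewrite (filter_ext_in _ (fun k => k =? s)).
    - fold (count_sat (fun k => k =? s) (seq 0 p)).
      rewrite count_sat_eqb_seq0. now apply Nat.ltb_lt in Hs as ->.
    - intros k Hk. apply in_seq in Hk. now rewrite Nat.mod_small by lia. }
  replace (1 / INR p) with (INR (count_sat (fun k => k mod p =? s) (seq 0 p)) / INR p)
    by now rewrite Hcount.
  apply density_periodic; [lia|].
  intros k. now rewrite <- (Nat.mul_1_l p) at 1; rewrite Nat.Div0.mod_add.
Qed.

Definition odd_weight (n : nat) : R := 2 / 3 + (-1) ^ n / (3 * 2 ^ n).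
Definition even_weight (n : nat) : R := 2 - odd_weight n.
Definition parity_weight (n s : nat) : R :=
  if Nat.even s then even_weight n else odd_weight n.

Lemma parity_weight_0 s : parity_weight 0 s = 1.
Proof. unfold parity_weight, even_weight, odd_weight. destruct (Nat.even s); cbn; field. Qed.

Lemma odd_weight_S n : odd_weight (S n) = even_weight n / 2.
Proof.
  unfold even_weight, odd_weight. cbn [pow]. field. apply pow_nonzero. lra.
Qed.

Lemma even_weight_S n : even_weight (S n) = even_weight n / 2 + odd_weight n.
Proof. unfold even_weight at 1. rewrite odd_weight_S. unfold even_weight. field. Qed.

Lemma parity_weight_double n s : parity_weight n (2 * s) = even_weight n.
Proof. unfold parity_weight. now rewrite Nat.even_mul. Qed.

Lemma parity_weight_odd n r : Nat.odd r = true -> parity_weight n r = odd_weight n.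
Proof. intros Hr. unfold parity_weight. now rewrite <- Nat.negb_odd, Hr. Qed.

Lemma neq_of_odd_neq x y : Nat.odd x <> Nat.odd y -> x <> y.
Proof. congruence. Qed.

Lemma density_collatz_iter_residue n : forall a s, (1 <= a)%nat -> (s < 2 ^ a)%nat ->
  density (fun k => collatz_iter n k mod 2 ^ a =? s) (parity_weight n s / 2 ^ a).
Proof.
  induction n as [|n IH]; intros a s Ha Hs.
  - rewrite parity_weight_0.
    replace (2 ^ a) with (INR (2 ^ a)) by (rewrite pow_INR; cbn; f_equal; ring).
    now apply density_residue.
  - assert (Hpow : 2 ^ S a = 2 * 2 ^ a) by reflexivity.
    assert (HpowN : (2 ^ S a = 2 * 2 ^ a)%nat) by apply Nat.pow_succ_r'.
    assert (Hodd2s : Nat.odd (2 * s) = false) by (now rewrite Nat.odd_mul).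
    destruct (Nat.even s) eqn:Hse.
    + destruct (collatz_preimage_even a s Ha Hs Hse) as [r [Hr [Hro Hpre]]].
      assert (Hro' : Nat.odd (r + 2 ^ a) = true) by now rewrite odd_add_pow2.
      apply density_ext with (fun k => (collatz_iter n k mod 2 ^ S a =? 2 * s) ||
        ((collatz_iter n k mod 2 ^ S a =? r) || (collatz_iter n k mod 2 ^ S a =? r + 2 ^ a)))%bool.
      { intros k. rewrite !Bool.orb_true_iff, !Nat.eqb_eq. symmetry. apply Hpre. }
      replace (parity_weight (S n) s / 2 ^ a) with
        (parity_weight n (2 * s) / 2 ^ S a +
         (parity_weight n r / 2 ^ S a + parity_weight n (r + 2 ^ a) / 2 ^ S a)).
      2: { unfold parity_weight at 4. rewrite Hse, even_weight_S, parity_weight_double,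
             !parity_weight_odd, Hpow by assumption.
           field. apply pow_nonzero. lra. }
      apply density_orb; [|apply IH; lia|apply density_orb; [|apply IH; lia..]].
      * intros k H1 H2. rewrite Bool.orb_true_iff, !Nat.eqb_eq in H2. apply Nat.eqb_eq in H1.
        destruct H2 as [H2|H2]; rewrite H2 in H1; revert H1; apply neq_of_odd_neq; congruence.
      * intros k H1 H2. apply Nat.eqb_eq in H1, H2. lia.
    + apply density_ext with (fun k => collatz_iter n k mod 2 ^ S a =? 2 * s).
      { intros k. rewrite !Nat.eqb_eq. symmetry. apply collatz_preimage_odd; auto.
        now rewrite <- Nat.negb_even, Hse. }
      replace (parity_weight (S n) s / 2 ^ a) with (parity_weight n (2 * s) / 2 ^ S a).
      2: { unfold parity_weight at 2. rewrite Hse, odd_weight_S, parity_weight_double, Hpow.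
           field. apply pow_nonzero. lra. }
      apply IH; lia.
Qed.

Lemma even_eqb_mod2 x : Nat.even x = (x mod 2 ^ 1 =? 0)%nat.
Proof.
  rewrite <- (even_mod_pow2 1 x) by lia. cbn [Nat.pow]. rewrite Nat.mul_1_r.
  pose proof (Nat.mod_upper_bound x 2 ltac:(lia)).
  destruct (x mod 2) as [|[|]]; [reflexivity..|lia].
Qed.

Lemma odd_eqb_mod2 x : Nat.odd x = (x mod 2 ^ 1 =? 1)%nat.
Proof.
  rewrite <- Nat.negb_even, even_eqb_mod2. cbn [Nat.pow]. rewrite Nat.mul_1_r.
  pose proof (Nat.mod_upper_bound x 2 ltac:(lia)).
  destruct (x mod 2) as [|[|]]; [reflexivity..|lia].
Qed.

Theorem theorem3p1 (n : nat) (hn : (1 <= n)%nat) :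
  Un_cv (fun m => INR (count_even n m) / INR m)
        (2 / 3 + (-1) ^ (n + 1) / (3 * 2 ^ (n + 1)))
  /\
  Un_cv (fun m => INR (count_odd n m) / INR m)
        (1 / 3 + (-1) ^ n / (3 * 2 ^ (n + 1))).
Proof.
  split.
  - change (density (fun k => Nat.even (collatz_iter n k)) (2 / 3 + (-1) ^ (n + 1) / (3 * 2 ^ (n + 1)))).
    replace (2 / 3 + _) with (parity_weight n 0 / 2 ^ 1).
    2: { cbn [Nat.even parity_weight]. rewrite Nat.add_1_r, pow_1, <- odd_weight_S. reflexivity. }
    apply density_ext with (fun k => collatz_iter n k mod 2 ^ 1 =? 0)%nat.
    { intros k. now rewrite even_eqb_mod2. }
    apply density_collatz_iter_residue; cbn; lia.
  - change (density (fun k => Nat.odd (collatz_iter n k)) (1 / 3 + (-1) ^ n / (3 * 2 ^ (n + 1)))).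
    replace (1 / 3 + _) with (parity_weight n 1 / 2 ^ 1).
    2: { cbn [Nat.even parity_weight]. unfold odd_weight. rewrite pow_add.
         field. apply pow_nonzero. lra. }
    apply density_ext with (fun k => collatz_iter n k mod 2 ^ 1 =? 1)%nat.
    { intros k. now rewrite odd_eqb_mod2. }
    apply density_collatz_iter_residue; cbn; lia.
Qed.
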